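(* Let $A$ be a finitely generated free abelian group and $d\ge 4$. Let $\mathcal{J}(A)=\bigoplus_{k>0}\Gamma^k(A)$ be the augmentation ideal of the divided power algebra $\Gamma(A)=\Gamma_{\mathbb{Z}}(A)$, and filter $\Gamma^d(A)$ by $F_{-i}\Gamma^d(A)=\mathcal{J}(A)^i\cap\Gamma^d(A)$, with $\mathrm{gr}_{-i}\Gamma^d(A)=F_{-i}\Gamma^d(A)/F_{-i-1}\Gamma^d(A)$. Then $\mathrm{gr}_{-d+1}\Gamma^d(A)\simeq\sigma_{(1,d-2)}(A/2)$.
   Context: $A/2=A\otimes\mathbb{Z}/2$. For an $\mathbb{F}_2$-vector space $V$, $V^{(1)}$ is the Frobenius twist (the subfunctor of $S^2_{\mathbb{F}_2}(V)$ spanned by squares), and for $n\ge2$, $\sigma_{(1,n)}(V)$ is the cokernel of $u:\Lambda^2_{\mathbb{F}_2}(V^{(1)})\otimes S^{n-2}_{\mathbb{F}_2}(V)\to V^{(1)}\otimes S^n_{\mathbb{F}_2}(V)$, $u((x\wedge y)\otimes z)=x\otimes(y^2z)-y\otimes(x^2z)$ (here $x,y$ are viewed both as elements of $V^{(1)}$ and, via their squares $x^2,y^2$, in $S^2(V)$). *)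

From HB Require Import structures.
From mathcomp Require Import all_boot all_algebra.
From mathcomp Require Import mpoly.
Unset Printing Implicit Defensive.
Import GRing.Theory.
Local Open Scope ring_scope.

Inductive zspan {V : zmodType} (P : V -> Prop) : V -> Prop :=
| zspan0 : zspan P 0
| zspan_gen x : P x -> zspan P x
| zspan_sub x y : zspan P x -> zspan P y -> zspan P (x - y).

(* H1/K1 ~= H2/K2 as abelian groups (K_i subgroups of H_i): there is a map
   phi : H1 -> H2 inducing a group isomorphism of the quotients. *)
Definition quot_iso {V W : zmodType} (H1 K1 : V -> Prop) (H2 K2 : W -> Prop) : Prop :=
  exists phi : V -> W,
    [/\ (forall x, H1 x -> H2 (phi x)),
        (forall x y, H1 x -> H1 y -> K2 (phi (x + y) - phi x - phi y)),
        (forall x, H1 x -> (K2 (phi x) <-> K1 x)) &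
        (forall y, H2 y -> exists2 x, H1 x & K2 (phi x - y))].

(* ---------- Divided power algebra Gamma_Z(Z^n), modelled inside Q[x_1..x_n]
   as the subring with Z-basis the divided monomials x^[a] = x^a / a!. ---- *)
Definition dpmon (n : nat) (a : 'X_{1..n}) : {mpoly rat[n]} :=
  ((\prod_(i < n) (a i)`!)%:R)^-1 *: 'X_[a].

Definition Gamma (n : nat) : {mpoly rat[n]} -> Prop :=
  zspan (fun p => exists a, p = dpmon n a).

Definition GammaD (n d : nat) : {mpoly rat[n]} -> Prop :=
  zspan (fun p => exists2 a, mdeg a = d & p = dpmon n a).

Definition Jaug (n : nat) : {mpoly rat[n]} -> Prop :=
  zspan (fun p => exists2 a, (0 < mdeg a)%N & p = dpmon n a).

Definition Jpow (n i : nat) : {mpoly rat[n]} -> Prop :=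
  if i is 0 then Gamma n
  else zspan (fun p => exists2 f : 'I_i -> {mpoly rat[n]},
                 (forall j, Jaug n (f j)) & p = \prod_(j < i) f j).

Definition FilGamma (n i d : nat) (p : {mpoly rat[n]}) : Prop :=
  Jpow n i p /\ GammaD n d p.

(* S(V) = F_2[x_1..x_n]; S(V) (x) S(V) = {mpoly S(V)[n]} (outer variables
   = first tensor factor, coefficients = second tensor factor).
   V^{(1)} (x) S^m(V) sits inside S^2(V) (x) S^m(V). ------------------------ *)
Definition SV (n : nat) := {mpoly 'F_2[n]}.
Definition SV2 (n : nat) := {mpoly (SV n)[n]}.

Definition Sym (n k : nat) : SV n -> Prop :=
  zspan (fun p => exists2 m : 'X_{1..n}, mdeg m = k & p = 'X_[m]).

(* a vector of V = F_2^n, given by its support S, as an element of S^1(V) *)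
Definition linV (n : nat) (S : {set 'I_n}) : SV n := \sum_(i in S) 'X_i.
(* the same vector x seen in V^{(1)} \subset S^2(V), first tensor factor:
   x^{(1)} = x^2 = sum_{i in S} x_i^2 (characteristic 2) *)
Definition frobV (n : nat) (S : {set 'I_n}) : SV2 n := \sum_(i in S) ('X_i) ^+ 2.

Definition sigmaTarget (n m : nat) : SV2 n -> Prop :=
  zspan (fun p => exists S, exists2 w, Sym n m w & p = frobV n S * w%:MP).

(* image of u : Lambda^2(V^{(1)}) (x) S^{m-2}(V) -> V^{(1)} (x) S^m(V),
   u((x ^ y) (x) z) = x (x) (y^2 z) - y (x) (x^2 z) *)
Definition sigmaImage (n m : nat) : SV2 n -> Prop :=
  zspan (fun p => exists X Y, exists2 z, Sym n (m - 2) z &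
           p = frobV n X * ((linV n Y) ^+ 2 * z)%:MP - frobV n Y * ((linV n X) ^+ 2 * z)%:MP).

From mathcomp Require Import all_boot all_algebra.
From mathcomp Require Import mpoly.
From mathcomp Require Import zify.
Set Implicit Arguments.
Unset Strict Implicit.
Import GRing.Theory Num.Theory.
Local Open Scope ring_scope.

(** Write [x^a] for ordinary monomials in [Q[x_1..x_n]], so that
    [x^[a] = x^a / a!]. A factor [x^[a]] of [J] of degree at most 2 has
    [a! = 1] unless [a = 2 e_k], where [a! = 2]. Hence the coefficients of an
    element of [J^i], in the monomial basis [x^a], vanish below degree [i],
    are integers in degree [i], and in degree [i+1] are half-integers which are
    integers at square-free monomials. Conversely every [x^a] of degree [d]
    lies in [J^d], and [x^a / 2] lies in [J^(d-1)] when [a_k >= 2]. So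
    [gr_{-d+1} Gamma^d] is the [F_2]-space with basis the classes of
    [x^a / 2], [a] non-square-free of degree [d].

    Send [x^a / 2] to [x_k^(1) (x) x^(a - 2 e_k)] for the first [k] with
    [a_k >= 2]; another choice of [k] gives the same class modulo
    [im u], so the map is onto. The multiplication
    [V^(1) (x) S^(d-2)(V) -> S^d(V)] kills [im u] and sends that element to
    [x^a], which detects the kernel. *)

Section ZSpan.
Context {V : zmodType} (P : V -> Prop).

Lemma zspanN x : zspan P x -> zspan P (- x).
Proof. by move=> Px; rewrite -sub0r; apply: zspan_sub => //; apply: zspan0. Qed.

Lemma zspanD x y : zspan P x -> zspan P y -> zspan P (x + y).
Proof. by move=> Px Py; rewrite -[y]opprK; apply: zspan_sub => //; apply: zspanN. Qed.

Lemma zspanMz x (z : int) : zspan P x -> zspan P (x *~ z).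
Proof.
move=> Px; have PxMn k : zspan P (x *+ k).
  by elim: k => [|k IH]; [rewrite mulr0n; apply: zspan0 | rewrite mulrS; apply: zspanD].
by case: z => k; rewrite ?NegzE ?mulrNz; [apply: PxMn | apply/zspanN/PxMn].
Qed.

Lemma zspan_subB a b c e : zspan P (a - c) -> zspan P (b - e) -> zspan P (a - b - (c - e)).
Proof.
have -> : a - b - (c - e) = (a - c) - (b - e).
  by rewrite !opprB addrACA [RHS]addrACA [- b + _]addrC.
exact: zspan_sub.
Qed.

Lemma zspan_sum (I : Type) (r : seq I) (Q : pred I) (F : I -> V) :
  (forall i, Q i -> zspan P (F i)) -> zspan P (\sum_(i <- r | Q i) F i).
Proof. by move=> PF; apply: big_ind => //; [apply: zspan0 | apply: zspanD]. Qed.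

End ZSpan.

Lemma zspan_morph {V W : zmodType} (P : V -> Prop) (Q : W -> Prop) (f : V -> W) x :
  {morph f : a b / a - b} -> (forall y, P y -> zspan Q (f y)) ->
  zspan P x -> zspan Q (f x).
Proof.
move=> fB PQ; elim=> [|y /PQ //|y z _ Qy _ Qz]; last by rewrite fB; apply: zspan_sub.
by have := fB 0 0; rewrite !subrr => ->; apply: zspan0.
Qed.

Lemma prod_fact_dvd_fact_sum (I : Type) (r : seq I) (F : I -> nat) :
  (\prod_(i <- r) (F i)`! %| (\sum_(i <- r) F i)`!)%N.
Proof.
elim: r => [|x r IH]; first by rewrite !big_nil.
rewrite !big_cons; apply: dvdn_trans (dvdn_mul (dvdnn _) IH) _.
rewrite -(bin_fact (leq_addr (\sum_(i <- r) F i) (F x))) addKn.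
exact: dvdn_mull.
Qed.

Section DividedPowers.
Variable n : nat.
Implicit Types (a m : 'X_{1..n}) (p q : {mpoly rat[n]}).

Definition mfact a : nat := (\prod_(i < n) (a i)`!)%N.

Definition sqfree m : bool := [forall i, m i <= 1]%N.

Lemma dpmonE a : dpmon n a = (mfact a)%:R^-1 *: 'X_[a].
Proof. by []. Qed.

Lemma mfact_gt0 a : (0 < mfact a)%N.
Proof. by apply: prodn_gt0 => i; apply: fact_gt0. Qed.

Lemma mfact_dvd a : (mfact a %| (mdeg a)`!)%N.
Proof. by rewrite /mfact mdegE; apply: prod_fact_dvd_fact_sum. Qed.

Lemma mfact_sqfree a : sqfree a -> mfact a = 1%N.
Proof.
by move=> /forallP a_le1; rewrite /mfact big1 // => i _; case: (a i) (a_le1 i) => [|[|]].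
Qed.

Lemma dvd2_mfact a i : (1 < a i)%N -> (2 %| mfact a)%N.
Proof.
move=> a_i_gt1; apply: (@dvdn_trans (a i)`!); first by apply: dvdn_fact; lia.
by rewrite /mfact (bigD1 i) //= dvdn_mulr.
Qed.

Lemma sqfreeDl m1 m2 : sqfree (m1 + m2) -> sqfree m1.
Proof.
move=> /forallP le1; apply/forallP => i; have := le1 i; rewrite mnmDE.
exact/leq_trans/leq_addr.
Qed.

Lemma sqfreeDr m1 m2 : sqfree (m1 + m2) -> sqfree m2.
Proof. by rewrite addmC; apply: sqfreeDl. Qed.

Lemma mnm_le_mdeg m i : (m i <= mdeg m)%N.
Proof. by rewrite mdegE (bigD1 i) //= leq_addr. Qed.

Lemma lem_dblU m k : (1 < m k)%N -> (U_(k) + U_(k) <= m)%MM.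
Proof. by move=> m_k_gt1; apply/mnm_lepP => i; rewrite mnmDE mnm1E; case: eqP => // <-. Qed.

Lemma mdeg_sub_dblU m k : (1 < m k)%N -> mdeg (m - (U_(k) + U_(k))) = (mdeg m - 2)%N.
Proof.
move=> m_k_gt1; have := mdegD (m - (U_(k) + U_(k))) (U_(k) + U_(k)).
by rewrite submK ?lem_dblU // mdegD mdeg1; lia.
Qed.

Lemma mfact_dblU k : mfact (U_(k) + U_(k)) = 2%N.
Proof.
rewrite /mfact (bigD1 k) //= big1 ?muln1; first by rewrite mnmDE mnm1E eqxx.
by move=> i /negbTE k'i; rewrite mnmDE mnm1E eq_sym k'i.
Qed.

(* Necessary conditions on the coefficient [c] of [x^m] in an element of [J^i]. *)
Definition Jcoef i m (c : rat) : Prop :=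
  [/\ (mdeg m < i)%N -> c = 0, mdeg m = i -> c \is a Num.int,
      mdeg m = i.+1 -> 2 * c \is a Num.int &
      mdeg m = i.+1 -> sqfree m -> c \is a Num.int].

Definition Jcoefs i p : Prop := forall m, Jcoef i m p@_m.

Lemma Jcoef0 i m : Jcoef i m 0.
Proof. by split=> // *; rewrite ?mulr0 rpred0. Qed.

Lemma JcoefB i m c1 c2 : Jcoef i m c1 -> Jcoef i m c2 -> Jcoef i m (c1 - c2).
Proof.
case=> h1 h2 h3 h4 [g1 g2 g3 g4]; split=> *.
- by rewrite h1 // g1 // subrr.
- by rewrite rpredB ?h2 ?g2.
- by rewrite mulrBr rpredB ?h3 ?g3.
- by rewrite rpredB ?h4 ?g4.
Qed.

Lemma JcoefD i m c1 c2 : Jcoef i m c1 -> Jcoef i m c2 -> Jcoef i m (c1 + c2).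
Proof.
move=> J1 J2; rewrite -[c2]opprK; apply: JcoefB => //.
by rewrite -sub0r; apply: JcoefB => //; apply: Jcoef0.
Qed.

Lemma JcoefM i m1 m2 c1 c2 :
  Jcoef i m1 c1 -> Jcoef 1 m2 c2 -> Jcoef i.+1 (m1 + m2) (c1 * c2).
Proof.
case=> h1 h2 h3 h4 [g1 g2 g3 g4].
have [lt1|ge1] := ltnP (mdeg m1) i; first by rewrite h1 // mul0r; apply: Jcoef0.
have [lt2|ge2] := ltnP (mdeg m2) 1; first by rewrite g1 // mulr0; apply: Jcoef0.
rewrite /Jcoef mdegD; split=> deg_m.
- by lia.
- by rewrite rpredM ?h2 ?g2 //; lia.
- have [e1|e1] : mdeg m1 = i \/ mdeg m1 = i.+1 by lia.
  + by rewrite mulrCA rpredM ?h2 ?g3 //; lia.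
  + by rewrite mulrA rpredM ?h3 ?g2 //; lia.
- move=> sq; have [e1|e1] : mdeg m1 = i \/ mdeg m1 = i.+1 by lia.
  + by rewrite rpredM ?h2 ?g4 //; first [lia | exact: sqfreeDr sq].
  + by rewrite rpredM ?h4 ?g2 //; first [lia | exact: sqfreeDl sq].
Qed.

Lemma JcoefsM i p q : Jcoefs i p -> Jcoefs 1 q -> Jcoefs i.+1 (p * q).
Proof.
move=> Jp Jq m; rewrite mcoeffM; apply: (big_ind (Jcoef i.+1 m)).
- exact: Jcoef0.
- exact: JcoefD.
- by move=> k /eqP m_eq; have := JcoefM (Jp k.1) (Jq k.2); rewrite -m_eq.
Qed.

Lemma Jcoefs_zspan i (P : {mpoly rat[n]} -> Prop) p :
  (forall q, P q -> Jcoefs i q) -> zspan P p -> Jcoefs i p.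
Proof.
move=> PJ; elim=> [|y /PJ //|y z _ Jy _ Jz] m; first by rewrite mcoeff0; apply: Jcoef0.
by rewrite mcoeffB; apply: JcoefB.
Qed.

Lemma Jcoefs1 : Jcoefs 0 1.
Proof.
move=> m; rewrite mcoeff1; split=> [//|_|deg_m|deg_m _]; first exact: natr_int.
- by rewrite (negbTE (_ : m != 0%MM)) ?mulr0 ?rpred0 // -mdeg_eq0 deg_m.
- by rewrite (negbTE (_ : m != 0%MM)) ?rpred0 // -mdeg_eq0 deg_m.
Qed.

Lemma Jcoefs_dpmon a : (0 < mdeg a)%N -> Jcoefs 1 (dpmon n a).
Proof.
move=> deg_a m; rewrite dpmonE mcoeffZ mcoeffX.
have [<-{m}|_] := eqVneq a m; last by rewrite mulr0; apply: Jcoef0.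
have fact_le k : mdeg a = k -> (mfact a <= k`!)%N.
  by move=> deg_ak; apply: dvdn_leq; [apply: fact_gt0 | rewrite -deg_ak mfact_dvd].
have a_gt0 := mfact_gt0 a; rewrite mulr1; split=> [|/fact_le|/fact_le|_ /mfact_sqfree->].
- by lia.
- move=> le1; have {}le1 : (mfact a <= 1)%N := le1.
  by have -> : mfact a = 1%N by lia.
- move=> le2; have {}le2 : (mfact a <= 2)%N := le2.
  have [->|->] : mfact a = 1%N \/ mfact a = 2%N by lia.
    by rewrite invr1 mulr1 rpred_nat.
  by rewrite mulfV // rpred1.
- by rewrite invr1 rpred1.
Qed.

Lemma Jcoefs_prod i (f : 'I_i -> {mpoly rat[n]}) :
  (forall j, Jcoefs 1 (f j)) -> Jcoefs i (\prod_(j < i) f j).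
Proof.
elim: i f => [|i IH] f Jf; first by rewrite big_ord0; apply: Jcoefs1.
by rewrite big_ord_recr /=; apply: JcoefsM; [apply: IH | apply: Jf].
Qed.

Lemma Jcoefs_Jpow i p : Jpow n i.+1 p -> Jcoefs i.+1 p.
Proof.
apply: Jcoefs_zspan => _ [f Jf ->]; apply: Jcoefs_prod => j.
by apply: Jcoefs_zspan (Jf j) => _ [a deg_a ->]; apply: Jcoefs_dpmon.
Qed.

Lemma GammaD_coef d p m : GammaD n d p -> mdeg m != d -> p@_m = 0.
Proof.
move=> Gp deg_m; elim: Gp => [|_ [a deg_a ->]|y z _ y_m _ z_m].
- by rewrite mcoeff0.
- rewrite dpmonE mcoeffZ mcoeffX; case: eqP => [ea|_]; last by rewrite mulr0.
  by rewrite -ea deg_a eqxx in deg_m.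
- by rewrite mcoeffB y_m z_m subrr.
Qed.

Lemma FilGamma_coef i p m : FilGamma n i.+1 i.+2 p ->
  [/\ p@_m != 0 -> mdeg m = i.+2, 2 * p@_m \is a Num.int &
      sqfree m -> p@_m \is a Num.int].
Proof.
case=> /Jcoefs_Jpow/(_ m) [_ _ Jm2 Jm_sqf] /GammaD_coef p_m.
have [->|nz] := eqVneq p@_m 0; first by rewrite mulr0 !rpred0.
have deg_m : mdeg m = i.+2 by apply/eqP; apply: contraNT nz => /p_m ->.
by split=> // [|sq]; [apply: Jm2 | apply: Jm_sqf].
Qed.

Lemma FilGamma_int i p m : FilGamma n i.+1 i.+1 p -> p@_m \is a Num.int.
Proof.
case=> /Jcoefs_Jpow/(_ m) [_ Jm _ _] /GammaD_coef p_m.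
have [->|nz] := eqVneq p@_m 0; first exact: rpred0.
by apply: Jm; apply/eqP; apply: contraNT nz => /p_m ->.
Qed.

Lemma Jaug_dpmon a : (0 < mdeg a)%N -> Jaug n (dpmon n a).
Proof. by move=> deg_a; apply: zspan_gen; exists a. Qed.

Lemma Jpow1_Jaug q : Jaug n q -> Jpow n 1 q.
Proof. by move=> Jq; apply: zspan_gen; exists (fun _ => q); rewrite ?big_ord1. Qed.

Lemma Jpow_mul_Jaug i p q : Jpow n i.+1 p -> Jaug n q -> Jpow n i.+2 (p * q).
Proof.
move=> Jp Jq; apply: (zspan_morph (f := fun x => x * q) _ _ Jp) => [x y|_ [g Jg ->]].
  exact: mulrBl.
pose h (j : 'I_i.+2) := if insub (val j) is Some j' then g j' else q.
apply: zspan_gen; exists h; first by move=> j; rewrite /h; case: insubP.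
rewrite [RHS]big_ord_recr /=; congr (_ * _); last by rewrite /h insubF ?ltnn.
by apply: eq_bigr => j _; rewrite /h insubT /= ?ltn_ord // => lt_j; congr g; apply: val_inj.
Qed.

Lemma dpmon_mdeg1 a : mdeg a = 1%N -> dpmon n a = 'X_[a].
Proof.
move=> deg_a; rewrite dpmonE mfact_sqfree ?invr1 ?scale1r //.
by apply/forallP => i; rewrite -deg_a mnm_le_mdeg.
Qed.

Lemma Jpow_mpolyX k m : mdeg m = k.+1 -> Jpow n k.+1 'X_[m].
Proof.
elim: k m => [|k IH] m deg_m.
  by rewrite -dpmon_mdeg1 //; apply/Jpow1_Jaug/Jaug_dpmon; rewrite deg_m.
have [j m_j_gt0] : exists j, (0 < m j)%N.
  apply/existsP; apply: contraT; rewrite negb_exists => /forallP m0.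
  suff : m = 0%MM by move=> e; rewrite e mdeg0 in deg_m.
  by apply/mnmP => j; rewrite mnm0E; have := m0 j; case: (m j).
have le_m : (U_(j) <= m)%MM by apply/mnm_lepP => i; rewrite mnm1E; case: eqP => // <-.
rewrite -(submK le_m) mpolyXD; apply: Jpow_mul_Jaug.
  by apply: IH; have := mdegD (m - U_(j)) U_(j); rewrite submK // mdeg1; lia.
by rewrite -dpmon_mdeg1 ?mdeg1 //; apply/Jaug_dpmon; rewrite mdeg1.
Qed.

Lemma Jpow_half_mpolyX i a k : mdeg a = i.+3 -> (1 < a k)%N ->
  Jpow n i.+2 (2^-1 *: 'X_[a]).
Proof.
move=> deg_a a_k_gt1; have le_a := lem_dblU a_k_gt1.
rewrite -(submK le_a) mpolyXD scalerAr -[2]/(2%N%:R) -(mfact_dblU k) -dpmonE.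
apply: Jpow_mul_Jaug; first by apply: Jpow_mpolyX; rewrite mdeg_sub_dblU //; lia.
by apply: Jaug_dpmon; rewrite mdegD mdeg1.
Qed.

Lemma zspan_mpoly (P : {mpoly rat[n]} -> Prop) p (g : 'X_{1..n} -> rat) :
  (forall m, p@_m != 0 ->
     [/\ p@_m * g m \is a Num.int, g m != 0 & zspan P ((g m)^-1 *: 'X_[m])]) ->
  zspan P p.
Proof.
move=> Pg; rewrite [p]mpolyE; apply: zspan_sum => m _.
have [->|/Pg [/intrP [z pg_m] g_m_nz Pm]] := eqVneq p@_m 0.
  by rewrite scale0r; apply: zspan0.
suff -> : p@_m *: 'X_[m] = ((g m)^-1 *: 'X_[m]) *~ z by apply: zspanMz.
by rewrite -scaler_int scalerA -pg_m mulfK.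
Qed.

Lemma GammaD_of_coef d p :
  (forall m, p@_m != 0 -> mdeg m = d /\ p@_m * (mfact m)%:R \is a Num.int) ->
  GammaD n d p.
Proof.
move=> Gp; apply: (zspan_mpoly (g := fun m => (mfact m)%:R)) => m /Gp [deg_m int_m].
split=> //; first by rewrite pnatr_eq0 -lt0n mfact_gt0.
by apply: zspan_gen; exists m.
Qed.

Lemma Jpow_of_coef k p :
  (forall m, p@_m != 0 -> mdeg m = k.+1 /\ p@_m \is a Num.int) -> Jpow n k.+1 p.
Proof.
move=> Jp; apply: (zspan_mpoly (g := fun=> 1)) => m /Jp [deg_m int_m].
by rewrite mulr1 invr1 scale1r oner_neq0; split=> //; apply: Jpow_mpolyX.
Qed.

Lemma FilGamma_half_mpolyX i a k : mdeg a = i.+3 -> (1 < a k)%N ->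
  FilGamma n i.+2 i.+3 (2^-1 *: 'X_[a]).
Proof.
move=> deg_a a_k_gt1; split; first exact: Jpow_half_mpolyX deg_a a_k_gt1.
apply: GammaD_of_coef => m; rewrite mcoeffZ mcoeffX.
have [<-{m} _|_] := eqVneq a m; last by rewrite mulr0 eqxx.
by rewrite mulr1 -(divnK (dvd2_mfact a_k_gt1)) natrM mulrC mulfK.
Qed.

Lemma FilGammaB i d p q :
  FilGamma n i d p -> FilGamma n i d q -> FilGamma n i d (p - q).
Proof.
case=> Jp Gp [Jq Gq]; split; last exact: zspan_sub.
by move: Jp Jq; case: i => [|i]; apply: zspan_sub.
Qed.

Lemma FilGamma0 i d : FilGamma n i d 0.
Proof. by split; [case: i => [|i]|]; apply: zspan0. Qed.

End DividedPowers.

Lemma sqr_sum_char2 (R : comPzRingType) (I : Type) (r : seq I) (P : pred I) (F : I -> R) :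
  2%:R = 0 :> R -> (\sum_(i <- r | P i) F i) ^+ 2 = \sum_(i <- r | P i) F i ^+ 2.
Proof.
move=> char2; apply: (big_rec2 (fun x y => x ^+ 2 = y)); first by rewrite expr0n.
by move=> i x y _ <-; rewrite sqrrD -mulr_natr char2 mulr0 addr0.
Qed.

Lemma mpolyX_sqr (R : nzRingType) n (k : 'I_n) :
  ('X_k ^+ 2 : {mpoly R[n]}) = 'X_[U_(k) + U_(k)].
Proof. by rewrite mpolyXD expr2. Qed.

Lemma numqB (a b : rat) : a \is a Num.int -> b \is a Num.int ->
  numq (a - b) = numq a - numq b.
Proof. by move=> /intrP [za ->] /intrP [zb ->]; rewrite -rmorphB /= !numq_int. Qed.

Lemma numqD (a b : rat) : a \is a Num.int -> b \is a Num.int ->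
  numq (a + b) = numq a + numq b.
Proof. by move=> /intrP [za ->] /intrP [zb ->]; rewrite -rmorphD /= !numq_int. Qed.

Section Sigma.
Variable n : nat.
Implicit Types (m : 'X_{1..n}) (p q : SV2 n).

Lemma SV_char2 : 2%:R = 0 :> SV n.
Proof. by rewrite -mpolyC_nat (_ : 2%:R = 0 :> 'F_2) ?mpolyC0 //; apply/eqP. Qed.

Lemma SV2_char2 : 2%:R = 0 :> SV2 n.
Proof. by rewrite -mpolyC_nat SV_char2 mpolyC0. Qed.

(* The multiplication [S(V) (x) S(V) -> S(V)]: substitute the inner variables
   for the outer ones. *)
Definition tensor_mul p : SV n := p.@[fun i => 'X_i].

Lemma tensor_mulB p q : tensor_mul (p - q) = tensor_mul p - tensor_mul q.
Proof. exact: mevalB. Qed.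

Lemma tensor_mulM p q : tensor_mul (p * q) = tensor_mul p * tensor_mul q.
Proof. exact: mevalM. Qed.

Lemma tensor_mulC c : tensor_mul c%:MP = c.
Proof. exact: mevalC. Qed.

Lemma tensor_mulXU k : tensor_mul 'X_k = 'X_k.
Proof. exact: mevalXU. Qed.

Lemma tensor_mul_frobV S : tensor_mul (frobV n S) = linV n S ^+ 2.
Proof.
rewrite /tensor_mul /frobV /linV sqr_sum_char2 ?SV_char2 // raddf_sum /=.
by apply: eq_bigr => i _; rewrite rmorphXn /= mevalXU.
Qed.

Lemma tensor_mul_frobVC S c : tensor_mul (frobV n S * c%:MP) = linV n S ^+ 2 * c.
Proof. by rewrite tensor_mulM tensor_mulC tensor_mul_frobV. Qed.

Lemma tensor_mul_sigmaImage k p : sigmaImage n k p -> tensor_mul p = 0.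
Proof.
elim=> [|_ [X [Y [z _ ->]]]|y z _ y0 _ z0]; first exact: meval0.
  (* Rewriting both sides at once would compare the two [frobV] terms by
     evaluation, which is very slow. *)
  rewrite tensor_mulB; apply/eqP; rewrite subr_eq0; apply/eqP.
  by rewrite [LHS]tensor_mul_frobVC [RHS]tensor_mul_frobVC mulrCA.
by rewrite tensor_mulB y0 z0 subrr.
Qed.

Definition frob_split m : SV2 n :=
  if [pick k | (1 < m k)%N] is Some k
  then 'X_k ^+ 2 * ('X_[m - (U_(k) + U_(k))])%:MP else 0.

Lemma tensor_mul_frob_split m :
  tensor_mul (frob_split m) = (~~ sqfree m)%:R *: 'X_[m].
Proof.
rewrite /frob_split; case: pickP => [k m_k_gt1|m_le1].
  have -> : ~~ sqfree m by apply/forallPn; exists k; rewrite -ltnNge.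
  rewrite tensor_mulM tensor_mulC expr2 tensor_mulM tensor_mulXU -expr2 scale1r.
  by rewrite mpolyX_sqr -mpolyXD addmC submK // lem_dblU.
have -> : sqfree m by apply/forallP => i; rewrite leqNgt m_le1.
by rewrite scale0r /tensor_mul meval0.
Qed.

Lemma sigmaTarget_frob_split m : sigmaTarget n (mdeg m - 2) (frob_split m).
Proof.
rewrite /frob_split; case: pickP => [k m_k_gt1|_]; last exact: zspan0.
apply: zspan_gen; exists [set k]; exists 'X_[m - (U_(k) + U_(k))].
  by apply: zspan_gen; exists (m - (U_(k) + U_(k)))%MM; rewrite ?mdeg_sub_dblU.
by rewrite /frobV big_set1.
Qed.

Lemma frob_split_sigmaImage m i : (1 < m i)%N ->
  sigmaImage n (mdeg m - 2)
    (frob_split m - 'X_i ^+ 2 * ('X_[m - (U_(i) + U_(i))])%:MP).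
Proof.
move=> m_i_gt1; rewrite /frob_split; case: pickP => [k m_k_gt1|]; last first.
  by move/(_ i); rewrite m_i_gt1.
have [->|k'i] := eqVneq k i; first by rewrite subrr; apply: zspan0.
have sub_dblU_gt1 (j l : 'I_n) :
    j != l -> (1 < m j)%N -> (1 < (m - (U_(l) + U_(l)))%MM j)%N.
  by move=> /negbTE j'l m_j; rewrite mnmBE mnmDE mnm1E eq_sym j'l /= subn0.
set b := (m - (U_(k) + U_(k) + (U_(i) + U_(i))))%MM.
have dblU_b (j l : 'I_n) : j != l -> (1 < m j)%N -> (1 < m l)%N ->
    (U_(j) + U_(j) + (m - (U_(l) + U_(l) + (U_(j) + U_(j)))) = m - (U_(l) + U_(l)))%MM.
  by move=> j'l m_j m_l; rewrite -submDA addmC submK // lem_dblU // sub_dblU_gt1.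
apply: zspan_gen; exists [set k]; exists [set i]; exists 'X_[b].
  apply: zspan_gen; exists b => //.
  by rewrite /b -submDA !mdeg_sub_dblU // sub_dblU_gt1 // eq_sym.
(* Split the equation first, for the reason given in [tensor_mul_sigmaImage]. *)
rewrite /frobV /linV; apply: (congr2 (fun x y => x - y)).
all: apply: (congr2 (fun x y => x * y%:MP)); rewrite big_set1 //.
  by rewrite mpolyX_sqr -mpolyXD /b dblU_b // eq_sym.
by rewrite mpolyX_sqr -mpolyXD /b (addmC (U_(k) + U_(k)) (U_(i) + U_(i)))%MM dblU_b.
Qed.

End Sigma.

Section GradedMap.
Variables n d : nat.
Implicit Types (a m : 'X_{1..n}) (x : {mpoly rat[n]}).

(* [numq (2 * x@_m)] is meaningful only when [2 x_m] is an integer, as it is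
   on [F_{-d+1}]. *)
Definition gr_to_sigma x : SV2 n :=
  \sum_(m : 'X_{1..n < d.+1}) frob_split m *~ numq (2 * x@_m).

Definition half_integral x : Prop := forall m, 2 * x@_m \is a Num.int.

Lemma gr_to_sigma0 : gr_to_sigma 0 = 0.
Proof. by rewrite /gr_to_sigma big1 // => m _; rewrite mcoeff0 mulr0 (numq_int 0) mulr0z. Qed.

Lemma gr_to_sigmaB x y : half_integral x -> half_integral y ->
  gr_to_sigma (x - y) = gr_to_sigma x - gr_to_sigma y.
Proof.
move=> hx hy; rewrite /gr_to_sigma -sumrB; apply: eq_bigr => m _.
by rewrite mcoeffB mulrBr numqB ?mulrzBr ?hx ?hy.
Qed.

Lemma gr_to_sigmaD x y : half_integral x -> half_integral y ->
  gr_to_sigma (x + y) = gr_to_sigma x + gr_to_sigma y.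
Proof.
move=> hx hy; rewrite /gr_to_sigma -big_split; apply: eq_bigr => m _ /=.
by rewrite mcoeffD mulrDr numqD ?mulrzDr ?hx ?hy.
Qed.

Lemma tensor_mul_gr_to_sigma x : tensor_mul (gr_to_sigma x) =
  \sum_(m : 'X_{1..n < d.+1}) ((numq (2 * x@_m))%:~R * (~~ sqfree m)%:R) *: 'X_[m].
Proof.
rewrite /tensor_mul /gr_to_sigma raddf_sum; apply: eq_bigr => m _ /=.
by rewrite raddfMz /= -/(tensor_mul _) tensor_mul_frob_split -scaler_int scalerA.
Qed.

Lemma coef_tensor_mul_gr_to_sigma x m : (mdeg m < d.+1)%N ->
  (tensor_mul (gr_to_sigma x))@_m = (numq (2 * x@_m))%:~R * (~~ sqfree m)%:R.
Proof.
move=> deg_m; rewrite tensor_mul_gr_to_sigma.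
exact: (mcoeff_mpoly (fun m => (numq (2 * x@_m))%:~R * (~~ sqfree m)%:R)).
Qed.

Lemma gr_to_sigma_half a : (mdeg a < d.+1)%N ->
  gr_to_sigma (2^-1 *: 'X_[a]) = frob_split a.
Proof.
move=> deg_a; rewrite /gr_to_sigma (bigD1 (BMultinom deg_a)) //= big1 ?addr0.
  by rewrite mcoeffZ mcoeffX eqxx mulr1 mulfV // (numq_int 1) mulr1z.
move=> m a'm; rewrite mcoeffZ mcoeffX (_ : (a == m) = false).
  by rewrite !mulr0 (numq_int 0) mulr0z.
by apply/negbTE; apply: contra a'm => /eqP a_m; apply/eqP/val_inj.
Qed.

End GradedMap.

Section Isomorphism.
Variables n k : nat.
Implicit Types (x : {mpoly rat[n]}) (y : SV2 n).

Lemma FilGamma_half_integral x : FilGamma n k.+2 k.+3 x -> half_integral x.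
Proof. by move=> x_F m; have [] := FilGamma_coef m x_F. Qed.

Lemma sigmaTarget_gr_to_sigma x :
  FilGamma n k.+2 k.+3 x -> sigmaTarget n k.+1 (gr_to_sigma k.+3 x).
Proof.
move=> x_F; apply: zspan_sum => m _; have [deg_m _ _] := FilGamma_coef m x_F.
have [->|/deg_m deg_m3] := eqVneq x@_m 0.
  by rewrite mulr0 (numq_int 0) mulr0z; apply: zspan0.
by apply: zspanMz; have := sigmaTarget_frob_split m; rewrite deg_m3.
Qed.

Lemma FilGamma_of_sigmaImage x : FilGamma n k.+2 k.+3 x ->
  sigmaImage n k.+1 (gr_to_sigma k.+3 x) -> FilGamma n k.+3 k.+3 x.
Proof.
move=> x_F /tensor_mul_sigmaImage tensor0; split; last exact: x_F.2.
apply: Jpow_of_coef => m x_m_nz.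
have [/(_ x_m_nz) deg_m x_m_half x_m_sqf] := FilGamma_coef m x_F; split=> //.
have [/x_m_sqf //|not_sqf] := boolP (sqfree m).
have deg_m_lt : (mdeg m < k.+4)%N by rewrite deg_m.
have := coef_tensor_mul_gr_to_sigma x deg_m_lt.
rewrite tensor0 mcoeff0 not_sqf mulr1 => /esym/eqP.
rewrite -(dvdz_pcharf (pchar_Fp (isT : prime 2))) => /dvdzP [q x_m2].
have : 2 * x@_m = 2 * q%:~R by rewrite -(numqK x_m_half) x_m2 intrM mulrC.
by move/(mulfI (isT : (2 : rat) != 0)) ->; apply: intr_int.
Qed.

Lemma gr_to_sigma_FilGamma x : FilGamma n k.+3 k.+3 x -> gr_to_sigma k.+3 x = 0.
Proof.
move=> x_F; rewrite /gr_to_sigma big1 // => m _.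
have /intrP [z ->] := FilGamma_int m x_F.
rewrite mulrC -[2]/(2%:~R) -intrM numq_int mulrzA -mulrzr.
by rewrite -[(2 : int)%:~R]/(2%:R : SV2 n) SV2_char2 mulr0.
Qed.

Definition sigma_hit y : Prop :=
  exists2 x, FilGamma n k.+2 k.+3 x & sigmaImage n k.+1 (gr_to_sigma k.+3 x - y).

Lemma sigma_hit0 : sigma_hit 0.
Proof. by exists 0; [apply: FilGamma0 | rewrite gr_to_sigma0 subrr; apply: zspan0]. Qed.

Lemma sigma_hitB y1 y2 : sigma_hit y1 -> sigma_hit y2 -> sigma_hit (y1 - y2).
Proof.
move=> [x1 x1_F im1] [x2 x2_F im2]; exists (x1 - x2); first exact: FilGammaB.
rewrite (gr_to_sigmaB k.+3 (FilGamma_half_integral x1_F) (FilGamma_half_integral x2_F)).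
exact: zspan_subB im1 im2.
Qed.

Lemma sigma_hitD y1 y2 : sigma_hit y1 -> sigma_hit y2 -> sigma_hit (y1 + y2).
Proof.
move=> h1 h2; rewrite -[y2]opprK; apply: sigma_hitB => //.
by rewrite -sub0r; apply: sigma_hitB => //; apply: sigma_hit0.
Qed.

Lemma sigma_hit_frobV S b : mdeg b = k.+1 -> sigma_hit (frobV n S * ('X_[b])%:MP).
Proof.
move=> deg_b; rewrite /frobV mulr_suml; apply: big_ind => [|y1 y2|i _].
- exact: sigma_hit0.
- exact: sigma_hitD.
set a := (b + (U_(i) + U_(i)))%MM.
have deg_a : mdeg a = k.+3 by rewrite /a !mdegD mdeg1 deg_b; lia.
have a_i_gt1 : (1 < a i)%N by rewrite /a !mnmDE mnm1E eqxx /=; lia.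
exists (2^-1 *: 'X_[a]); first exact: FilGamma_half_mpolyX deg_a a_i_gt1.
have b_eq : b = (a - (U_(i) + U_(i)))%MM by rewrite /a addmK.
rewrite gr_to_sigma_half ?deg_a // b_eq.
by have := frob_split_sigmaImage a_i_gt1; rewrite deg_a.
Qed.

Lemma sigma_hit_sigmaTarget y : sigmaTarget n k.+1 y -> sigma_hit y.
Proof.
elim=> [|_ [S [w Sw ->]]|y1 y2 _ h1 _ h2]; [exact: sigma_hit0 | | exact: sigma_hitB].
elim: Sw => [|_ [b deg_b ->]|w1 w2 _ h1 _ h2]; first by rewrite mulr0; apply: sigma_hit0.
  exact: sigma_hit_frobV.
by rewrite mpolyCB mulrBr; apply: sigma_hitB h1 h2.
Qed.

End Isomorphism.

Unset Implicit Arguments.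
Local Close Scope ring_scope.

Theorem lemma8p4 (n d : nat) : 4 <= d ->
  quot_iso (FilGamma n d.-1 d) (FilGamma n d d)
           (sigmaTarget n (d - 2)) (sigmaImage n (d - 2)).
Proof.
move=> d_ge4; have [k ->] : exists k, d = k.+3 by exists (d - 3); lia.
exists (gr_to_sigma k.+3); split.
- exact: sigmaTarget_gr_to_sigma.
- move=> x y x_F y_F.
  rewrite (gr_to_sigmaD k.+3 (FilGamma_half_integral x_F) (FilGamma_half_integral y_F)).
  by rewrite addrAC addrK subrr; apply: zspan0.
- move=> x x_F; split; first exact: FilGamma_of_sigmaImage.
  by move=> /gr_to_sigma_FilGamma ->; apply: zspan0.
- by move=> y /sigma_hit_sigmaTarget [x x_F im_x]; exists x.
Qed.
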